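(* Let $F$ be $(\ell,\omega)$-relatively smooth on $\mathcal X\cap\mathcal S$ and suppose that $(x,y)\mapsto\sqrt{D^{\mathrm{sym}}_\omega(x,y)}$ is a metric. Then for any $x\in\mathcal X\cap\mathcal S$ and any $\rho,s>0$ with $\rho>\ell/s+2\ell$, $$\frac{\Delta_\rho(x)}{C(\ell,\rho,s)}\le\Delta^+_\rho(x)\le C(\ell,\rho,s)\,\Delta_\rho(x),\qquad C(\ell,\rho,s):=\frac{(1+s)(\rho-\ell)+(1+s^{-1})\ell}{\rho-\ell-(1+s^{-1})\ell}.$$ In particular, for $s=1$, $\rho=4\ell$ one has $C(\ell,\rho,s)=8$ and $\frac18\Delta_{4\ell}(x)\le\Delta^+_{4\ell}(x)\le8\Delta_{4\ell}(x)$.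
   Context: Let $\mathcal X\subseteq\mathbb R^d$ be closed and convex, $\|\cdot\|$ a norm on $\mathbb R^d$. The problem is $\min_{x\in\mathcal X}\Phi(x):=F(x)+r(x)$, with $F$ differentiable and $r:\mathbb R^d\to\mathbb R$ convex, proper, lower semicontinuous. A DGF is $\omega:\mathrm{cl}(\mathcal S)\to\mathbb R$, $\mathcal S$ open with $\mathrm{ri}(\mathcal X)\subseteq\mathcal S$, $\omega$ continuously differentiable on $\mathcal S$ and $1$-strongly convex w.r.t. $\|\cdot\|$ on $\mathrm{cl}(\mathcal S)$; $D_\omega(x,y)=\omega(x)-\omega(y)-\langle\nabla\omega(y),x-y\rangle$ and $D^{\mathrm{sym}}_\omega(x,y):=D_\omega(x,y)+D_\omega(y,x)$. For $\rho>0$ and $x\in\mathcal X\cap\mathcal S$: $\hat x:=\arg\min_{y\in\mathcal X}[\Phi(y)+\rho D_\omega(y,x)]$, $\Delta_\rho(x):=\rho^2D^{\mathrm{sym}}_\omega(\hat x,x)$ (Bregman proximal mapping); $x^+:=\arg\min_{y\in\mathcal X}[\langle\nabla F(x),y\rangle+r(y)+\rho D_\omega(y,x)]$, $\Delta^+_\rho(x):=\rho^2D^{\mathrm{sym}}_\omega(x^+,x)$ (Bregman gradient mapping); these minimizers are assumed to exist. $F$ is $(\ell,\omega)$-relatively smooth on $\mathcal X\cap\mathcal S$ if for all $x,y\in\mathcal X\cap\mathcal S$: $-\ell D_\omega(x,y)\le F(x)-F(y)-\langle\nabla F(y),x-y\rangle\le\ell D_\omega(x,y)$. *)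

From HB Require Import structures.
From mathcomp Require Import all_boot all_order all_algebra.
From mathcomp Require Import all_classical all_reals all_analysis.
Set Implicit Arguments.
Unset Strict Implicit.
Unset Printing Implicit Defensive.
Import Order.TTheory GRing.Theory Num.Theory.
Import numFieldNormedType.Exports.
Local Open Scope classical_set_scope.
Local Open Scope ring_scope.

Section Defs.
Variables (R : realType) (d : nat).
Local Notation V := 'rV[R]_d.

Definition dotp (u v : V) : R := \sum_(i < d) u 0 i * v 0 i.

Definition is_norm (N : V -> R) : Prop :=
  (forall x, 0 <= N x) /\ (forall x, N x = 0 -> x = 0) /\
  (forall (a : R) x, N (a *: x) = `|a| * N x) /\
  (forall x y, N (x + y) <= N x + N y).

Definition convex_set_ (A : set V) : Prop :=
  forall x y (t : R), A x -> A y -> 0 <= t <= 1 -> A (t *: x + (1 - t) *: y).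

Definition convex_fun (f : V -> R) : Prop :=
  forall x y (t : R), 0 <= t <= 1 ->
    f (t *: x + (1 - t) *: y) <= t * f x + (1 - t) * f y.

Definition lsc (f : V -> R) : Prop :=
  forall x (a : R), a < f x -> \forall y \near x, a < f y.

Definition has_gradient_at (f : V -> R) (g : V -> V) (x : V) : Prop :=
  differentiable f x /\ forall h, 'd f x h = dotp (g x) h.

Definition aff_hull (A : set V) : set V :=
  [set z | exists (n : nat) (p : 'I_n -> V) (w : 'I_n -> R),
     (forall i, A (p i)) /\ \sum_(i < n) w i = 1 /\ z = \sum_(i < n) w i *: p i].

Definition rel_interior (A : set V) : set V :=
  [set x | A x /\ exists2 e : R, 0 < e & (ball x e `&` aff_hull A) `<=` A].

Definition is_DGF (X S : set V) (N : V -> R) (omega : V -> R) (gw : V -> V) : Prop :=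
  open S /\ rel_interior X `<=` S /\
  (forall y, S y -> has_gradient_at omega gw y /\ {for y, continuous gw}) /\
  (forall x y (t : R), closure S x -> closure S y -> 0 <= t <= 1 ->
     closure S (t *: x + (1 - t) *: y) ->
     omega (t *: x + (1 - t) *: y) <=
       t * omega x + (1 - t) * omega y - t * (1 - t) / 2 * N (x - y) ^+ 2).

Definition bregman (omega : V -> R) (gw : V -> V) (x y : V) : R :=
  omega x - omega y - dotp (gw y) (x - y).

Definition bregman_sym (omega : V -> R) (gw : V -> V) (x y : V) : R :=
  bregman omega gw x y + bregman omega gw y x.

Definition rel_smooth (A : set V) (F : V -> R) (gF : V -> V)
    (omega : V -> R) (gw : V -> V) (l : R) : Prop :=
  forall x y, A x -> A y ->
    - (l * bregman omega gw x y) <= F x - F y - dotp (gF y) (x - y) /\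
    F x - F y - dotp (gF y) (x - y) <= l * bregman omega gw x y.

Definition is_metric_on (A : set V) (dist : V -> V -> R) : Prop :=
  (forall x y, A x -> A y -> 0 <= dist x y) /\
  (forall x y, A x -> A y -> (dist x y = 0 <-> x = y)) /\
  (forall x y, A x -> A y -> dist x y = dist y x) /\
  (forall x y z, A x -> A y -> A z -> dist x z <= dist x y + dist y z).

Definition is_bregman_prox (X : set V) (F r omega : V -> R) (gw : V -> V)
    (rho : R) (x xh : V) : Prop :=
  X xh /\ forall y, X y ->
    F xh + r xh + rho * bregman omega gw xh x <= F y + r y + rho * bregman omega gw y x.

Definition is_bregman_grad (X : set V) (gF : V -> V) (r omega : V -> R) (gw : V -> V)
    (rho : R) (x xp : V) : Prop :=
  X xp /\ forall y, X y ->
    dotp (gF x) xp + r xp + rho * bregman omega gw xp x <=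
    dotp (gF x) y + r y + rho * bregman omega gw y x.

(* Delta_rho(x) = rho^2 Dsym(xh, x) (and the same formula for Delta^+ with xp) *)
Definition Delta (omega : V -> R) (gw : V -> V) (rho : R) (x z : V) : R :=
  rho ^+ 2 * bregman_sym omega gw z x.

End Defs.

Definition Ccoef (R : realType) (l rho s : R) : R :=
  ((1 + s) * (rho - l) + (1 + s^-1) * l) / (rho - l - (1 + s^-1) * l).

From HB Require Import structures.
From mathcomp Require Import all_boot all_order all_algebra.
From mathcomp Require Import all_classical all_reals all_analysis.
From mathcomp Require Import ring lra.
Import Order.TTheory GRing.Theory Num.Theory.
Import numFieldNormedType.Exports.
Local Open Scope classical_set_scope.
Local Open Scope ring_scope.

(* Write A = Dsym(xh, x), B = Dsym(xp, x), P = Dsym(xp, xh).  Adding the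
   first-order optimality conditions of xh (tested at xp) and of xp (tested
   at xh) gives rho P <= <grad F(xh) - grad F(x), xp - xh>, and relative
   smoothness bounds the right-hand side by l (P + A + B); hence
   (rho - l) P <= l (A + B).  The triangle inequality for sqrt Dsym and Young's
   inequality give B <= (1 + s) A + (1 + 1/s) P, and eliminating P yields
   B <= C A; the roles of xh and xp are symmetric.
   Closedness of X, the norm, lower semicontinuity of r, continuity of
   grad omega and the strong convexity of omega only serve the existence of the minimizers, which the
   statement takes as given. *)

Set Implicit Arguments.
Unset Strict Implicit.
Unset Printing Implicit Defensive.

Section DirectionalDerivatives.
Context {R : realType} {d : nat}.
Local Notation V := 'rV[R]_d.

Lemma dotp_is_linear (u : V) : linear (dotp u : V -> R^o).
Proof.
move=> k v w; rewrite /dotp /GRing.scale /= mulr_sumr -big_split.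
by apply: eq_bigr => i _; rewrite !mxE mulrDr mulrCA.
Qed.

HB.instance Definition _ (u : V) :=
  GRing.isLinear.Build R V R^o *:%R (dotp u) (dotp_is_linear u).

Lemma is_derive_dotp (u a v : V) : is_derive a v (dotp u) (dotp u v).
Proof.
have q : (fun h => h^-1 *: ((dotp u \o shift a) (h *: v) - dotp u a)) @ 0^'
    --> dotp u v.
  apply: cvg_near_cst; near=> h.
  have h0 : h != 0 by near: h; exact: withinT.
  rewrite /= [X in _ *: X](_ : _ = h * dotp u v) /GRing.scale /= ?mulKf //.
  by rewrite linearD linearZ addrK.
by apply: DeriveDef; [exact: cvgP q | exact: cvg_lim q].
Unshelve. all: by end_near.
Qed.

Lemma has_gradient_is_derive (f : V -> R) (g : V -> V) a v :
  has_gradient_at f g a -> is_derive a v f (dotp (g a) v).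
Proof.
by move=> [df dfE]; rewrite -dfE -deriveE //; apply/derivableP/diff_derivable.
Qed.

Lemma is_derive_bregman (omega : V -> R) (gw : V -> V) x a v :
  has_gradient_at omega gw a ->
  is_derive a v (bregman omega gw ^~ x) (dotp (gw a) v - dotp (gw x) v).
Proof.
move=> gomega.
have -> : bregman omega gw ^~ x =
    omega - cst (omega x - dotp (gw x) x) - dotp (gw x).
  by apply/funext => z; rewrite /bregman linearB !fctE; lra.
rewrite -[X in is_derive _ _ _ (X - _)]subr0.
apply: is_deriveB; first apply: is_deriveB.
- exact: has_gradient_is_derive.
- exact: is_derive_dotp.
Qed.

Lemma convex_argmin_is_derive_ge0 (X : set V) (phi r : V -> R) a y L :
  convex_set_ X -> convex_fun r -> X a -> X y ->
  (forall z, X z -> phi a + r a <= phi z + r z) ->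
  is_derive a (y - a) phi L -> 0 <= L + (r y - r a).
Proof.
move=> cX cr Xa Xy amin dphi.
have qL : (fun h => h^-1 *: (phi (h *: (y - a) + a) - phi a) + (r y - r a))
    @ 0^' --> L + (r y - r a).
  apply: cvgD; last exact: cvg_cst.
  have := @ex_derive _ _ _ _ _ _ _ dphi.
  by rewrite /derivable -/(derive _ _ _) derive_val.
apply: (cvgr_to_ge (cvg_dnbhs_at_right qL)); near=> h.
have h0 : 0 < h by near: h; exact: nbhs_right_gt.
have h1 : h < 1 by near: h; exact: nbhs_right_lt.
have h01 : 0 <= h <= 1 by rewrite !ltW.
have -> : h *: (y - a) + a = h *: y + (1 - h) *: a.
  by rewrite scalerBr scalerBl scale1r addrA addrAC.
have rz := cr y a h h01; have mz := amin _ (cX y a h Xy Xa h01).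
have -> : forall c, h^-1 *: c + (r y - r a) = h^-1 * (c + h * (r y - r a)).
  by move=> c; rewrite mulrDr mulKf // lt0r_neq0.
rewrite pmulr_rge0 ?invr_gt0 //; lra.
Unshelve. all: by end_near.
Qed.

Lemma bregman_argmin_optimality (X : set V) (phi r omega : V -> R)
    (gw : V -> V) (g : V) rho x a y :
  convex_set_ X -> convex_fun r -> X a -> X y ->
  is_derive a (y - a) phi (dotp g (y - a)) -> has_gradient_at omega gw a ->
  (forall z, X z -> phi a + r a + rho * bregman omega gw a x <=
                    phi z + r z + rho * bregman omega gw z x) ->
  0 <= dotp g (y - a) + rho * (dotp (gw a) (y - a) - dotp (gw x) (y - a))
       + (r y - r a).
Proof.
move=> cX cr Xa Xy dphi gomega amin.
apply: (@convex_argmin_is_derive_ge0 X (phi + rho \*: bregman omega gw ^~ x))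
  => //.
- by move=> z Xz; have := amin z Xz; rewrite !fctE /= /GRing.scale /=; lra.
- exact/is_deriveD/is_deriveZ/is_derive_bregman.
Qed.

End DirectionalDerivatives.

Section BregmanDivergence.
Context {R : realType} {d : nat}.
Local Notation V := 'rV[R]_d.
Variables (omega : V -> R) (gw : V -> V).

Lemma bregman_symC x y : bregman_sym omega gw x y = bregman_sym omega gw y x.
Proof. exact: addrC. Qed.

Lemma bregman_sym_ge0 (A : set V) x y :
  is_metric_on A (fun x y => Num.sqrt (bregman_sym omega gw x y)) ->
  A x -> A y -> 0 <= bregman_sym omega gw x y.
Proof.
move=> [_ [metric0 _]] Ax Ay; rewrite leNgt; apply/negP => neg.
have /(metric0 _ _ Ax Ay) exy : Num.sqrt (bregman_sym omega gw x y) = 0.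
  by rewrite ler0_sqrtr // ltW.
by move: neg; rewrite exy /bregman_sym /bregman !subrr raddf0 subrr addr0 ltxx.
Qed.

(* The two-sided bounds give l D(u, v) >= 0 whatever the sign of l, so each
   one-sided term l D is dominated by l Dsym. *)
Lemma rel_smooth_gradient_gap (A : set V) (F : V -> R) (gF : V -> V) l u v w :
  rel_smooth A F gF omega gw l -> A u -> A v -> A w ->
  dotp (gF v) (w - v) - dotp (gF u) (w - v) <=
  l * (bregman_sym omega gw w v + bregman_sym omega gw w u +
       bregman_sym omega gw v u).
Proof.
move=> smooth Au Av Aw.
move: (smooth w v Aw Av) (smooth v w Av Aw) (smooth w u Aw Au)
  (smooth u w Au Aw) (smooth v u Av Au) (smooth u v Au Av).
rewrite /bregman_sym /bregman !linearB /=; lra.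
Qed.

End BregmanDivergence.

Lemma sqrtr_triangle_young (R : rcfType) (s a b p : R) :
  0 < s -> 0 <= a -> 0 <= b -> 0 <= p ->
  Num.sqrt b <= Num.sqrt p + Num.sqrt a -> b <= (1 + s) * a + (1 + s^-1) * p.
Proof.
move=> s0 a0 b0 p0 tri.
have young : 2 * (Num.sqrt p * Num.sqrt a) <= s * a + s^-1 * p.
  rewrite -(ler_pM2l s0) mulrDr [s * (s^-1 * p)]mulrA divff ?gt_eqF // mul1r.
  have := sqr_ge0 (s * Num.sqrt a - Num.sqrt p).
  by rewrite sqrrB !exprMn !sqr_sqrtr //; lra.
have : b <= (Num.sqrt p + Num.sqrt a) ^+ 2.
  by rewrite -[b]sqr_sqrtr // ler_sqr ?nnegrE ?addr_ge0 ?sqrtr_ge0.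
rewrite sqrrD !sqr_sqrtr //; lra.
Qed.

Lemma le_Ccoef_mul (R : realType) (l rho s A B P : R) :
  0 < rho -> 0 < s -> l / s + 2 * l < rho ->
  (rho - l) * P <= l * (A + B) -> B <= (1 + s) * A + (1 + s^-1) * P ->
  B <= Ccoef l rho s * A.
Proof.
move=> rho0 s0 hrho sep BAP.
have si0 : 0 < s^-1 by rewrite invr_gt0.
have rhol : 0 < rho - l.
  have [l0|l0] := lerP 0 l; last by lra.
  have : 0 <= l / s by rewrite divr_ge0 // ltW.
  lra.
have den0 : 0 < rho - l - (1 + s^-1) * l by rewrite /= in hrho; lra.
rewrite /Ccoef mulrAC ler_pdivlMr //.
have := ler_wpM2l (ltW rhol) BAP.
have := ler_wpM2l (ltW (addr_gt0 ltr01 si0)) sep.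
nra.
Qed.

(* For c <= 0 the hypotheses force a = 0 (recall a / 0 = 0). *)
Lemma ler_div_of_le_mul (R : realFieldType) (a b c : R) :
  0 <= a -> 0 <= b -> a <= c * b -> a / c <= b.
Proof.
move=> a0 b0 acb; have [c0|c0] := ltrP 0 c; first by rewrite ler_pdivrMr // mulrC.
have -> : a = 0.
  by apply/eqP; rewrite eq_le a0 andbT (le_trans acb) // mulr_le0_ge0.
by rewrite mul0r.
Qed.

Lemma Ccoef_4l_1 (R : realType) (l : R) : 0 < l -> Ccoef l (4 * l) 1 = 8.
Proof.
move=> l0; rewrite /Ccoef invr1.
have -> : (1 + 1) * (4 * l - l) + (1 + 1) * l = 8 * l by ring.
have -> : 4 * l - l - (1 + 1) * l = l by ring.
by rewrite mulfK // gt_eqF.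
Qed.

Section ProxVersusGradientStep.
Variables (R : realType) (d : nat).
Local Notation V := 'rV[R]_d.
Variables (X S : set V) (F r omega : V -> R) (gF gw : V -> V) (l rho : R).
Variables (x xh xp : V).
Hypotheses (cvX : convex_set_ X) (cvr : convex_fun r).
Hypothesis gradF : has_gradient_at F gF xh.
Hypothesis gradw : forall y, S y -> has_gradient_at omega gw y.
Hypothesis smooth : rel_smooth (X `&` S) F gF omega gw l.
Hypothesis metric :
  is_metric_on (X `&` S) (fun x y => Num.sqrt (bregman_sym omega gw x y)).
Hypotheses (Xx : X x) (Sx : S x) (Sxh : S xh) (Sxp : S xp).
Hypothesis prox : is_bregman_prox X F r omega gw rho x xh.
Hypothesis grad : is_bregman_grad X gF r omega gw rho x xp.

Local Notation A := (bregman_sym omega gw xh x).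
Local Notation B := (bregman_sym omega gw xp x).
Local Notation P := (bregman_sym omega gw xp xh).

Lemma prox_grad_gap_ge :
  rho * P <= dotp (gF xh) (xp - xh) - dotp (gF x) (xp - xh).
Proof.
have [Xxh hmin] := prox; have [Xxp pmin] := grad.
have := bregman_argmin_optimality cvX cvr Xxh Xxp
  (has_gradient_is_derive _ gradF) (gradw Sxh) hmin.
have := bregman_argmin_optimality cvX cvr Xxp Xxh
  (is_derive_dotp _ _ _) (gradw Sxp) pmin.
rewrite /bregman_sym /bregman !linearB /=; lra.
Qed.

Lemma prox_grad_dist_le : (rho - l) * P <= l * (A + B).
Proof.
have := rel_smooth_gradient_gap smooth (conj Xx Sx) (conj prox.1 Sxh)
  (conj grad.1 Sxp).
have := prox_grad_gap_ge; lra.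
Qed.

Lemma bregman_sym_le_Ccoef s : 0 < rho -> 0 < s -> l / s + 2 * l < rho ->
  B <= Ccoef l rho s * A /\ A <= Ccoef l rho s * B.
Proof.
move=> rho0 s0 hrho.
have XSx : (X `&` S) x by [].
have XSxh : (X `&` S) xh by split; [exact: prox.1 |].
have XSxp : (X `&` S) xp by split; [exact: grad.1 |].
have [A0 B0 P0] : [/\ 0 <= A, 0 <= B & 0 <= P].
  by split; exact: bregman_sym_ge0 metric _ _.
have [_ [_ [_ tri]]] := metric.
split.
  apply: (le_Ccoef_mul rho0 s0 hrho prox_grad_dist_le).
  by apply: sqrtr_triangle_young => //; exact: tri.
have sep : (rho - l) * P <= l * (B + A).
  by rewrite [B + A]addrC; exact: prox_grad_dist_le.
apply: (le_Ccoef_mul rho0 s0 hrho sep).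
apply: sqrtr_triangle_young => //.
by rewrite -(bregman_symC omega gw xh xp); exact: tri.
Qed.

Lemma Delta_prox_grad_Ccoef s : 0 < rho -> 0 < s -> l / s + 2 * l < rho ->
  Delta omega gw rho x xh / Ccoef l rho s <= Delta omega gw rho x xp /\
  Delta omega gw rho x xp <= Ccoef l rho s * Delta omega gw rho x xh.
Proof.
move=> rho0 s0 hrho; have [BA AB] := bregman_sym_le_Ccoef rho0 s0 hrho.
have A0 := bregman_sym_ge0 metric (conj prox.1 Sxh) (conj Xx Sx).
have B0 := bregman_sym_ge0 metric (conj grad.1 Sxp) (conj Xx Sx).
rewrite /Delta; split; last by rewrite mulrCA ler_wpM2l ?sqr_ge0.
apply: ler_div_of_le_mul; rewrite ?(mulr_ge0 (sqr_ge0 rho)) //.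
by rewrite mulrCA ler_wpM2l ?sqr_ge0.
Qed.

End ProxVersusGradientStep.

Theorem lemma1 (R : realType) (d : nat) (X S : set 'rV[R]_d) (N : 'rV[R]_d -> R)
    (F r omega : 'rV[R]_d -> R) (gF gw : 'rV[R]_d -> 'rV[R]_d) (l : R) :
  closed X -> convex_set_ X ->
  is_norm N ->
  (forall x, has_gradient_at F gF x) ->
  convex_fun r -> lsc r ->
  is_DGF X S N omega gw ->
  rel_smooth (X `&` S) F gF omega gw l ->
  is_metric_on (X `&` S) (fun x y => Num.sqrt (bregman_sym omega gw x y)) ->
  forall x, X x -> S x ->
  (forall rho s xh xp, 0 < rho -> 0 < s -> l / s + 2 * l < rho ->
     is_bregman_prox X F r omega gw rho x xh -> S xh ->
     is_bregman_grad X gF r omega gw rho x xp -> S xp ->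
     Delta omega gw rho x xh / Ccoef l rho s <= Delta omega gw rho x xp /\
     Delta omega gw rho x xp <= Ccoef l rho s * Delta omega gw rho x xh) /\
  (0 < l ->
     Ccoef l (4 * l) 1 = 8 /\
     forall xh xp,
       is_bregman_prox X F r omega gw (4 * l) x xh -> S xh ->
       is_bregman_grad X gF r omega gw (4 * l) x xp -> S xp ->
       Delta omega gw (4 * l) x xh / 8 <= Delta omega gw (4 * l) x xp /\
       Delta omega gw (4 * l) x xp <= 8 * Delta omega gw (4 * l) x xh).
Proof.
move=> _ cvX _ gradF cvr _ [_ [_ [gradw _]]] smooth metric x Xx Sx.
have {}gradw y : S y -> has_gradient_at omega gw y by move=> /gradw[].
split=> [rho s xh xp rho0 s0 hrho prox Sxh grad Sxp | l0].
  exact: (Delta_prox_grad_Ccoef cvX cvr (gradF xh) gradw smooth metric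
    Xx Sx Sxh Sxp prox grad rho0 s0 hrho).
split=> [|xh xp prox Sxh grad Sxp]; first exact: Ccoef_4l_1.
rewrite -(Ccoef_4l_1 l0).
apply: (Delta_prox_grad_Ccoef (s := 1) cvX cvr (gradF xh) gradw smooth metric
  Xx Sx Sxh Sxp prox grad); rewrite ?divr1; lra.
Qed.
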